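(* The product in $\mathbf{Sys}(L)$ of a set-indexed family of sober affine systems is sober.
   Context: Fix a variety $\mathbf{A}$ of algebras (full subcategory of the category of $\Omega$-algebras and homomorphisms closed under products, subalgebras and homomorphic images) having set-indexed coproducts $(A_i\xrightarrow{\mu_i}\coprod_iA_i)_i$. Fix an $\mathbf{A}$-algebra $L$; $L^X$ is the power algebra. An affine system is $(X,\kappa,A)$ with $X$ a set, $A$ an algebra, $\kappa:A\to L^X$ a homomorphism; a morphism $(f,\varphi):(X_1,\kappa_1,A_1)\to(X_2,\kappa_2,A_2)$ is a map $f:X_1\to X_2$ with a homomorphism $\varphi:A_2\to A_1$ such that $\kappa_1(\varphi(a))(x)=\kappa_2(a)(f(x))$; this is $\mathbf{Sys}(L)$. For an algebra $A$, $Pt_L(A)$ is the set of homomorphisms $A\to L$; for a system $(X,\kappa,A)$, $\ell:X\to Pt_L(A)$ is $\ell(x)(a)=\kappa(a)(x)$, and the system is sober if $\ell$ is bijective. The product of $(X_i,\kappa_i,A_i)_{i\in I}$ is $(\prod_iX_i,\kappa,\coprod_iA_i)$ with projections $(\pi_i,\mu_i)$, where $\kappa$ is the unique homomorphism with $\kappa(\mu_i(a))(x)=\kappa_i(a)(x_i)$. *)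

From mathcomp Require Import ssreflect ssrfun ssrbool.
Set Implicit Arguments.
Unset Strict Implicit.

(* A signature Omega: a type of operation symbols, each with an arity
   (an arbitrary type, so infinitary operations are allowed too). *)
Record signature := Signature { op : Type; arity : op -> Type }.
Arguments arity : clear implicits.

Record algebra (S : signature) := Algebra {
  carrier :> Type;
  interp : forall o : op S, (arity S o -> carrier) -> carrier }.
Arguments interp {S} a o _.

Definition is_hom (S : signature) (A B : algebra S) (f : A -> B) : Prop :=
  forall (o : op S) (args : arity S o -> A),
    f (interp A o args) = interp B o (fun k => f (args k)).

Record hom (S : signature) (A B : algebra S) := Hom {
  hom_fun :> A -> B;
  hom_morph : is_hom hom_fun }.

Definition prod_alg (S : signature) (I : Type) (F : I -> algebra S) : algebra S :=
  @Algebra S (forall i, F i)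
    (fun o args => fun i => interp (F i) o (fun k => args k i)).

Definition pow_alg (S : signature) (L : algebra S) (X : Type) : algebra S :=
  prod_alg (fun _ : X => L).

Definition op_closed (S : signature) (A : algebra S) (P : A -> Prop) : Prop :=
  forall (o : op S) (args : arity S o -> A),
    (forall k, P (args k)) -> P (interp A o args).

Definition sub_alg (S : signature) (A : algebra S) (P : A -> Prop)
  (HP : op_closed P) : algebra S :=
  @Algebra S {x : A | P x}
    (fun o args => exist P (interp A o (fun k => proj1_sig (args k)))
                     (HP o _ (fun k => proj2_sig (args k)))).

Definition is_variety (S : signature) (V : algebra S -> Prop) : Prop :=
  [/\ (forall (I : Type) (F : I -> algebra S), (forall i, V (F i)) -> V (prod_alg F)),
      (forall (A : algebra S) (P : A -> Prop) (HP : op_closed P),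
          V A -> V (sub_alg HP)) &
      (forall (A B : algebra S) (f : hom A B),
          (forall b : B, exists a : A, f a = b) -> V A -> V B)].

Definition is_coproduct (S : signature) (V : algebra S -> Prop) (I : Type)
  (F : I -> algebra S) (C : algebra S) (mu : forall i, hom (F i) C) : Prop :=
  V C /\
  forall (D : algebra S), V D -> forall (g : forall i, hom (F i) D),
    exists h : hom C D,
      (forall i (a : F i), h (mu i a) = g i a) /\
      (forall h' : hom C D, (forall i (a : F i), h' (mu i a) = g i a) ->
         forall c : C, h' c = h c).

Arguments is_coproduct {S} V {I} F C mu.

Definition has_coproducts (S : signature) (V : algebra S -> Prop) : Prop :=
  forall (I : Type) (F : I -> algebra S), (forall i, V (F i)) ->
    exists (C : algebra S) (mu : forall i, hom (F i) C), is_coproduct V F C mu.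

Record system (S : signature) (L : algebra S) := System {
  pts : Type;
  alg : algebra S;
  kappa : hom alg (pow_alg L pts) }.
Arguments System {S L pts alg} kappa.

Definition Pt (S : signature) (L A : algebra S) : Type := hom A L.

Lemma ell_is_hom (S : signature) (L : algebra S) (s : system L) (x : pts s) :
  is_hom (fun a : alg s => kappa s a x).
Proof.
move=> o args; by rewrite (hom_morph (kappa s)).
Qed.

Definition ell (S : signature) (L : algebra S) (s : system L) (x : pts s) :
  Pt L (alg s) := Hom (@ell_is_hom S L s x).

Definition sober (S : signature) (L : algebra S) (s : system L) : Prop :=
  bijective (@ell S L s).

(** The coproduct property makes restriction along the coprojections a bijection
    Pt_L(∐ A_i) ≅ ∏ Pt_L(A_i).  Composed with the map ℓ of the product system it
    gives the product of the maps ℓ_i of the factors, and a product of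
    bijections is a bijection; hence ℓ is bijective. *)

From mathcomp Require Import ssreflect ssrfun ssrbool.
From Stdlib Require Import ClassicalEpsilon FunctionalExtensionality ProofIrrelevance.

Set Implicit Arguments.
Unset Strict Implicit.

Lemma inj_surj_bij (A B : Type) (f : A -> B) :
  injective f -> (forall b, exists a, f a = b) -> bijective f.
Proof.
move=> f_inj f_surj.
pose g b := proj1_sig (constructive_indefinite_description _ (f_surj b)).
have gK : cancel g f.
  by move=> b; exact: proj2_sig (constructive_indefinite_description _ (f_surj b)).
by exists g => // a; apply: f_inj; rewrite gK.
Qed.

Lemma bij_dprod (I : Type) (A B : I -> Type) (f : forall i, A i -> B i) :
  (forall i, bijective (f i)) -> bijective (fun (x : forall i, A i) i => f i (x i)).
Proof.
move=> f_bij.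
have inv i : {g | cancel (f i) g /\ cancel g (f i)}.
  by apply: constructive_indefinite_description; case: (f_bij i) => g; exists g.
exists (fun y i => proj1_sig (inv i) (y i)) => [x|y];
  by apply: functional_extensionality_dep => i; case: (inv i) => g [].
Qed.

Lemma hom_ext (S : signature) (A B : algebra S) (f g : hom A B) :
  f =1 g -> f = g.
Proof.
case: f g => [f f_hom] [g g_hom] /= /functional_extensionality fg.
by subst g; rewrite (proof_irrelevance _ f_hom g_hom).
Qed.

Definition hom_comp (S : signature) (A B D : algebra S) (p : hom B D) (m : hom A B) :
  hom A D.
Proof.
refine (@Hom S A D (fun a => p (m a)) _).
by move=> o args; rewrite (hom_morph m) (hom_morph p).
Defined.

Section CoproductPoints.

Variables (S : signature) (V : algebra S -> Prop) (L : algebra S) (I : Type).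
Variables (F : I -> algebra S) (C : algebra S) (mu : forall i, hom (F i) C).
Hypotheses (HL : V L) (HC : is_coproduct V F C mu).

Definition restrict_pt (p : Pt L C) : forall i, Pt L (F i) :=
  fun i => hom_comp p (mu i).

Lemma restrict_pt_inj : injective restrict_pt.
Proof.
move=> p q pq.
have [h [_ h_uniq]] := HC.2 L HL (restrict_pt p).
apply: hom_ext => c; rewrite (h_uniq p) // (h_uniq q) // => i a.
by rewrite pq.
Qed.

Lemma restrict_pt_surj (g : forall i, Pt L (F i)) : exists p, restrict_pt p = g.
Proof.
have [h [h_mu _]] := HC.2 L HL g.
exists h; apply: functional_extensionality_dep => i.
by apply: hom_ext; exact: h_mu.
Qed.

Lemma restrict_pt_bij : bijective restrict_pt.
Proof. exact: inj_surj_bij restrict_pt_inj restrict_pt_surj. Qed.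

End CoproductPoints.

Lemma restrict_pt_ell_prod (S : signature) (L : algebra S) (I : Type)
  (s : I -> system L) (C : algebra S) (mu : forall i, hom (alg (s i)) C)
  (k : hom C (pow_alg L (forall i, pts (s i))))
  (Hk : forall i (a : alg (s i)) (x : forall j, pts (s j)),
          k (mu i a) x = kappa (s i) a (x i))
  (x : forall i, pts (s i)) :
  restrict_pt mu (@ell _ _ (System k) x) = fun i => ell (x i).
Proof.
apply: functional_extensionality_dep => i.
by apply: hom_ext => a /=; rewrite Hk.
Qed.

Theorem proposition18 (S : signature) (V : algebra S -> Prop)
  (HV : is_variety V) (Hcoprod : has_coproducts V)
  (L : algebra S) (HL : V L)
  (I : Type) (s : I -> system L) (Hs : forall i, V (alg (s i)))
  (Hsober : forall i, sober (s i))
  (C : algebra S) (mu : forall i, hom (alg (s i)) C)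
  (HC : is_coproduct V (fun i => alg (s i)) C mu)
  (k : hom C (pow_alg L (forall i, pts (s i))))
  (Hk : forall i (a : alg (s i)) (x : forall j, pts (s j)),
          k (mu i a) x = kappa (s i) a (x i)) :
  sober (System k).
Proof.
have restrict_bij := restrict_pt_bij HL HC.
have [unrestrict restrictK _] := restrict_bij.
have ell_prod_bij := bij_dprod (f := fun i => @ell _ _ (s i)) Hsober.
apply: (eq_bij (bij_comp (bij_can_bij restrict_bij restrictK) ell_prod_bij)) => x /=.
by rewrite -(restrict_pt_ell_prod Hk) restrictK.
Qed.
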